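(* Let $t\in T$ with $t>0$, and assume each source is present on a contiguous run of time steps: if $n\in A_{t_1}$ and $n\in A_{t_3}$ with $t_1\le t_2\le t_3$ in $T$, then $n\in A_{t_2}$. Let $M_{t-\delta}$ be a gated input-set model with registered set $R$ and thresholds $(\theta^\alpha_n,\theta^\omega_n)_{n\in R}$ such that (i) $M_{t-\delta}$ has RCS at $t-\delta$, (ii) $\theta^\alpha_n,\theta^\omega_n\le t-\delta$ for all $n\in R$, and (iii) $R\subseteq\bigcup_{t'\in T,\,t'\le t-\delta}A_{t'}$. Suppose no new source is introduced at $t$, i.e. $A_t\subseteq A_{t-\delta}$ (zero or more sources may be removed). Define $M_t$ from $M_{t-\delta}$ by setting $\theta^\omega_n=t$ for every $n\in A_t$ and leaving all other thresholds and the registered set unchanged. Then $M_t$ accurately models time $t$ and has RCS at $t$ (and all its thresholds are $\le t$).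
   Context: Time steps form the set $T=\{0,\delta,2\delta,\dots\}$ for a fixed time step size $\delta>0$ (so $\min T=0$). Sources (e.g. agents) are identified by natural numbers. At each $t\in T$ a finite set $A_t\subseteq\mathbb{N}$ of sources is present, and each present source $n\in A_t$ supplies a value $x_n(t)$ of a fixed type $\mathcal{T}$. The true input set at time $t$ is $S(t)=\{(n,x_n(t)) : n\in A_t\}\subseteq \mathbb{N}\times\mathcal{T}$. A gated input-set model $M$ consists of a finite set $R\subseteq\mathbb{N}$ of registered sources and, for each $n\in R$, two time thresholds $\theta^\alpha_n,\theta^\omega_n\in T$ (parameters of two time-conditional variables). The gated contribution of $n\in R$ at time $t$ is $g_n(t)=\{(n,x_n(t))\}$ if $\theta^\alpha_n\le t\le\theta^\omega_n$, and $g_n(t)=\emptyset$ otherwise. The input set computed by $M$ at time $t$ is $S_M(t)=\bigcup_{n\in R} g_n(t)$ (realised by a chain of union variables starting from a socket variable with degenerate distribution at $\emptyset$). $M$ accurately models time $t$ if $S_M(t)=S(t)$. A model $M_t$ has retrospective causal stationarity (RCS) at $t$ if it accurately models $t$ and every $t'\in T$ with $t'<t$. *)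

(* Time steps T = {0, delta, 2 delta, ...} with delta > 0 are represented by
   their index k : nat (t = k * delta); the order on T is the order on indices,
   t - delta corresponds to k.-1 (for k > 0). *)
From mathcomp Require Import all_boot.
Set Implicit Arguments. Unset Strict Implicit. Unset Printing Implicit Defensive.

Section Defs.
Variable V : Type.

(* Environment: A k = (finite) set of present sources at time index k,
   x n k = value supplied by source n at time index k. *)

Definition true_input (A : nat -> seq nat) (x : nat -> nat -> V) (k : nat)
  : nat * V -> Prop :=
  fun p => p.1 \in A k /\ p.2 = x p.1 k.

Record model := Model {
  reg : seq nat;
  th_alpha : nat -> nat;
  th_omega : nat -> nat
}.

Definition gated (x : nat -> nat -> V) (M : model) (n k : nat) : nat * V -> Prop :=
  fun p => th_alpha M n <= k <= th_omega M n /\ p = (n, x n k).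

Definition model_input (x : nat -> nat -> V) (M : model) (k : nat) : nat * V -> Prop :=
  fun p => exists2 n, n \in reg M & gated x M n k p.

Definition accurate (A : nat -> seq nat) (x : nat -> nat -> V) (M : model) (k : nat) :=
  forall p, model_input x M k p <-> true_input A x k p.

Definition RCS (A : nat -> seq nat) (x : nat -> nat -> V) (M : model) (k : nat) :=
  accurate A x M k /\ forall k', k' < k -> accurate A x M k'.

Definition extend_model (A : nat -> seq nat) (M : model) (k : nat) : model :=
  Model (reg M) (th_alpha M) (fun n => if n \in A k then k else th_omega M n).

End Defs.

(* Accuracy at t - delta forces every source n present at t - delta to be
   registered with its gate open there; since theta^omega_n <= t - delta,
   this means theta^omega_n = t - delta.  As A_t is contained in A_{t-delta},
   moving theta^omega_n to t for n in A_t opens exactly the gates of the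
   sources present at t, and it changes no gate at an earlier time, because
   those gates already stayed open up to t - delta. *)
From mathcomp Require Import all_boot.

Set Implicit Arguments.
Unset Strict Implicit.
Unset Printing Implicit Defensive.

Definition gate_open (M : model) (n k : nat) : bool :=
  th_alpha M n <= k <= th_omega M n.

Section GatedModels.

Variables (V : Type) (A : nat -> seq nat) (x : nat -> nat -> V).

Lemma RCS_accurate_le (M : model) (j k : nat) :
  RCS A x M j -> k <= j -> accurate A x M k.
Proof.
case=> acc_j acc_lt; rewrite leq_eqVlt => /predU1P[-> | ] //.
exact: acc_lt.
Qed.

Lemma accurate_present_gate_open (M : model) (k n : nat) :
  accurate A x M k -> n \in A k -> n \in reg M /\ gate_open M n k.
Proof.
move=> acc_k n_k.
have [m m_reg [gate_m [eq_nm _]]] := proj2 (acc_k (n, x n k)) (conj n_k erefl).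
by rewrite eq_nm.
Qed.

Lemma model_input_eq_gate (M1 M2 : model) (k : nat) (p : nat * V) :
  reg M1 = reg M2 ->
  (forall n, n \in reg M1 -> gate_open M1 n k = gate_open M2 n k) ->
  model_input x M1 k p <-> model_input x M2 k p.
Proof.
rewrite /gate_open => eq_reg eq_gate; split=> -[n n_reg [gate_n ->]]; exists n.
- by rewrite -eq_reg.
- by split=> //; rewrite -eq_gate.
- by rewrite eq_reg.
- by split=> //; rewrite eq_gate // eq_reg.
Qed.

Lemma accurate_eq_gate (M1 M2 : model) (k : nat) :
  reg M1 = reg M2 ->
  (forall n, n \in reg M1 -> gate_open M1 n k = gate_open M2 n k) ->
  accurate A x M1 k -> accurate A x M2 k.
Proof.
move=> eq_reg eq_gate acc1 p.
exact: iff_trans (iff_sym (model_input_eq_gate p eq_reg eq_gate)) (acc1 p).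
Qed.

Lemma extend_model_gate_now (M : model) (k n : nat) :
  th_omega M n < k ->
  gate_open (extend_model A M k) n k = (n \in A k) && (th_alpha M n <= k).
Proof.
rewrite /gate_open /=; case: (n \in A k) => [_ | omega_lt].
  by rewrite leqnn andbT.
by rewrite [k <= _]leqNgt omega_lt andbF.
Qed.

Lemma extend_model_gate_before (M : model) (k k' n : nat) :
  k' < k -> (n \in A k -> k' <= th_omega M n) ->
  gate_open (extend_model A M k) n k' = gate_open M n k'.
Proof.
rewrite /gate_open /= => lt_k'k; case: (n \in A k) => // /(_ isT) le_k'_omega.
by rewrite (ltnW lt_k'k) le_k'_omega.
Qed.

Lemma extend_model_accurate_now (M : model) (j : nat) :
  accurate A x M j ->
  (forall n, n \in reg M -> th_omega M n <= j) ->
  {subset A j.+1 <= A j} ->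
  accurate A x (extend_model A M j.+1) j.+1.
Proof.
move=> acc_j omega_le sub_A [n v]; rewrite /true_input /=; split.
  case=> m m_reg [+ [-> ->]]; rewrite -/(gate_open _ _ _) extend_model_gate_now ?ltnS ?omega_le //.
  by case/andP.
case=> n_now ->.
have [n_reg /andP[alpha_le _]] := accurate_present_gate_open acc_j (sub_A _ n_now).
exists n => //; split=> //; rewrite -/(gate_open _ _ _).
by rewrite extend_model_gate_now ?ltnS ?omega_le // n_now (leqW alpha_le).
Qed.

Lemma extend_model_RCS_past (M : model) (j k' : nat) :
  RCS A x M j ->
  (forall n, n \in reg M -> th_omega M n <= j) ->
  {subset A j.+1 <= A j} ->
  k' < j.+1 -> accurate A x (extend_model A M j.+1) k'.
Proof.
move=> rcs_j omega_le sub_A lt_k'j.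
apply: accurate_eq_gate (RCS_accurate_le rcs_j lt_k'j) => // n n_reg.
rewrite extend_model_gate_before // => n_now.
have [_ /andP[_ j_le_omega]] :=
  accurate_present_gate_open (proj1 rcs_j) (sub_A _ n_now).
exact: leq_trans (ltnSE lt_k'j) j_le_omega.
Qed.

End GatedModels.

Theorem lemma3 (V : Type) (A : nat -> seq nat) (x : nat -> nat -> V)
  (M : model) (k : nat) :
  0 < k ->
  (* contiguous presence *)
  (forall (n t1 t2 t3 : nat), t1 <= t2 -> t2 <= t3 ->
     n \in A t1 -> n \in A t3 -> n \in A t2) ->
  (* (i) RCS at t - delta *)
  RCS A x M k.-1 ->
  (* (ii) thresholds <= t - delta *)
  (forall n, n \in reg M -> th_alpha M n <= k.-1 /\ th_omega M n <= k.-1) ->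
  (* (iii) R is contained in the union of A_t' for t' <= t - delta *)
  (forall n, n \in reg M -> exists2 k', k' <= k.-1 & n \in A k') ->
  (* no new source at t *)
  {subset A k <= A k.-1} ->
  let M' := extend_model A M k in
  accurate A x M' k /\ RCS A x M' k /\
  (forall n, n \in reg M' -> th_alpha M' n <= k /\ th_omega M' n <= k).
Proof.
case: k => // j _ _ rcs_j th_le _ sub_A M' /=.
have omega_le n : n \in reg M -> th_omega M n <= j by case/th_le.
have acc_now := extend_model_accurate_now (proj1 rcs_j) omega_le sub_A.
split=> //; split; first by split=> // k'; apply: extend_model_RCS_past.
move=> n n_reg; have [alpha_le omega_le_j] := th_le n n_reg.
by rewrite /= (leqW alpha_le); case: ifP => // _; rewrite leqW.
Qed.
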